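(* Let $K$ be a compact convex set with nonempty interior in a two-dimensional real vector space, centrally symmetric with respect to the origin. Then $K$ is an ellipse (i.e. a region bounded by an ellipse centered at the origin) if and only if for all $x,y\in\partial K$ with $x\neq\pm y$, $K$ is invariant under the linear map $T$ defined by $T(x+y)=-x-y$ and $T(y-x)=y-x$. *)

From Stdlib Require Import Reals.
Open Scope R_scope.

Definition pt := (R * R)%type.

Definition padd (p q : pt) : pt := (fst p + fst q, snd p + snd q).
Definition psub (p q : pt) : pt := (fst p - fst q, snd p - snd q).
Definition popp (p : pt) : pt := (- fst p, - snd p).
Definition pscal (t : R) (p : pt) : pt := (t * fst p, t * snd p).

Definition pnorm (p : pt) : R := sqrt (fst p ^ 2 + snd p ^ 2).
Definition pdist (p q : pt) : R := pnorm (psub p q).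

Definition interior_pt (K : pt -> Prop) (p : pt) : Prop :=
  exists r, 0 < r /\ forall q, pdist q p < r -> K q.
Definition closure_pt (K : pt -> Prop) (p : pt) : Prop :=
  forall r, 0 < r -> exists q, K q /\ pdist q p < r.
Definition boundary_pt (K : pt -> Prop) (p : pt) : Prop :=
  closure_pt K p /\ ~ interior_pt K p.

Definition is_closed (K : pt -> Prop) : Prop := forall p, closure_pt K p -> K p.
Definition is_bounded (K : pt -> Prop) : Prop :=
  exists M, forall p, K p -> pnorm p <= M.
(* Heine-Borel in R^2: compact = closed and bounded *)
Definition is_compact (K : pt -> Prop) : Prop := is_closed K /\ is_bounded K.

Definition is_convex (K : pt -> Prop) : Prop :=
  forall p q t, K p -> K q -> 0 <= t <= 1 ->
    K (padd (pscal (1 - t) p) (pscal t q)).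

Definition centrally_symmetric (K : pt -> Prop) : Prop :=
  forall p, K p -> K (popp p).

Definition nonempty_interior (K : pt -> Prop) : Prop :=
  exists p, interior_pt K p.

Definition lin_app (a b c d : R) (p : pt) : pt :=
  (a * fst p + b * snd p, c * fst p + d * snd p).

(* K is the (closed) region bounded by an ellipse centred at the origin:
   K = { v | Q(v) <= 1 } for a positive definite quadratic form Q. *)
Definition is_ellipse (K : pt -> Prop) : Prop :=
  exists a b c : R, 0 < a /\ 0 < a * c - b * b /\
    forall p, K p <-> a * fst p ^ 2 + 2 * b * fst p * snd p + c * snd p ^ 2 <= 1.

(* If [K] is the ellipse [Q <= 1], boundary points satisfy [Q = 1], so [x + y] and [y - x] are
   [Q]-orthogonal and [T] is a [Q]-isometry.

   Conversely, among the ellipses [S(unit disk)] inscribed in [K], with [S] symmetric positive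
   definite, there is a unique one of maximal area: [det] is strictly concave along segments of
   such matrices, so near-maximal ellipses are close to each other and maximizing sequences
   converge.  A linear map of determinant [-1] preserving [K] maps this ellipse to an inscribed
   ellipse of the same area, hence to itself, so it preserves its quadratic form [Q].  The map [T]
   attached to boundary points [x], [y] sends [x] to [-y]; hence [Q] is constant on the boundary
   of [K], and [K] is a sublevel set of [Q]. *)

From Stdlib Require Import Reals Lra Lia Classical IndefiniteDescription.
Open Scope R_scope.

Ltac pt_field :=
  repeat match goal with p : pt |- _ => destruct p end;
  unfold padd, psub, popp, pscal, lin_app; simpl; f_equal; field.

Lemma pow2_pos x : x <> 0 -> 0 < x ^ 2.
Proof. intros Hx. rewrite <- Rsqr_pow2. now apply Rsqr_pos_lt. Qed.

Definition nsq (v : pt) : R := fst v ^ 2 + snd v ^ 2.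
Definition det2 (u v : pt) : R := fst u * snd v - snd u * fst v.

Lemma nsq_ge0 v : 0 <= nsq v.
Proof. unfold nsq; nra. Qed.

Lemma nsq_pos v : v <> (0, 0) -> 0 < nsq v.
Proof.
  destruct v as [x y]; unfold nsq; simpl; intros Hv.
  destruct (Req_dec x 0); destruct (Req_dec y 0); subst; try nra.
  now contradiction Hv.
Qed.

Lemma nsq_pscal t v : nsq (pscal t v) = t ^ 2 * nsq v.
Proof. destruct v; unfold nsq, pscal; cbn [fst snd]; ring. Qed.

Lemma pnorm_ge0 v : 0 <= pnorm v.
Proof. apply sqrt_pos. Qed.

Lemma coord_le_pnorm x y : x <= pnorm (x, y) /\ y <= pnorm (x, y).
Proof.
  assert (Hsq : forall z, z <= sqrt (z ^ 2))
    by (intros z; rewrite <- Rsqr_pow2, sqrt_Rsqr_abs; apply Rle_abs).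
  unfold pnorm; cbn [fst snd].
  split; eapply Rle_trans; try apply Hsq; apply sqrt_le_1_alt; nra.
Qed.

Lemma pnorm_lt_iff v r : 0 < r -> pnorm v < r <-> nsq v < r ^ 2.
Proof.
  intros Hr. pose proof (nsq_ge0 v). unfold pnorm; fold (nsq v).
  rewrite <- (sqrt_pow2 r) at 1 by lra. split; intros H'.
  - now apply sqrt_lt_0_alt.
  - apply sqrt_lt_1_alt; lra.
Qed.

Lemma pnorm_scal t v : pnorm (pscal t v) = Rabs t * pnorm v.
Proof.
  destruct v as [x y]; unfold pnorm, pscal; cbn [fst snd].
  replace ((t * x) ^ 2 + (t * y) ^ 2) with (t ^ 2 * (x ^ 2 + y ^ 2)) by ring.
  rewrite sqrt_mult_alt by nra. now rewrite <- pow2_abs, sqrt_pow2 by apply Rabs_pos.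
Qed.

Lemma pnorm_pos v : v <> (0, 0) -> 0 < pnorm v.
Proof. intros Hv. apply sqrt_lt_R0, (nsq_pos v Hv). Qed.

Lemma pnorm_le_abs x y : pnorm (x, y) <= Rabs x + Rabs y.
Proof.
  unfold pnorm; cbn [fst snd]. rewrite <- (sqrt_pow2 (Rabs x + Rabs y)) by
    (pose proof (Rabs_pos x); pose proof (Rabs_pos y); lra).
  apply sqrt_le_1_alt. rewrite <- (pow2_abs x), <- (pow2_abs y).
  pose proof (Rabs_pos x); pose proof (Rabs_pos y); nra.
Qed.

Lemma lin_app_padd a b c d u v :
  lin_app a b c d (padd u v) = padd (lin_app a b c d u) (lin_app a b c d v).
Proof. pt_field. Qed.

Lemma lin_app_pscal a b c d t v :
  lin_app a b c d (pscal t v) = pscal t (lin_app a b c d v).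
Proof. pt_field. Qed.

Lemma det2_lin_app a b c d u v :
  det2 (lin_app a b c d u) (lin_app a b c d v) = (a * d - b * c) * det2 u v.
Proof. destruct u, v; unfold det2, lin_app; simpl; ring. Qed.

Lemma det2_decomp u v w :
  pscal (det2 u v) w = padd (pscal (det2 w v) u) (pscal (det2 u w) v).
Proof. unfold det2; pt_field. Qed.

Lemma det2_sum_diff x y : det2 (padd x y) (psub y x) = 2 * det2 x y.
Proof. destruct x, y; unfold det2, padd, psub; cbn [fst snd]; ring. Qed.

Lemma collinear_pscal x y : det2 x y = 0 -> x <> (0, 0) ->
  exists t, y = pscal t x.
Proof.
  intros Hxy Hx. pose proof (nsq_pos x Hx) as Hn.
  exists ((fst x * fst y + snd x * snd y) / nsq x).
  destruct x as [x1 x2], y as [y1 y2]; unfold det2, nsq, pscal in *; cbn [fst snd] in *.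
  f_equal; field_simplify_eq; try lra.
  - pose proof (f_equal (Rmult x2) Hxy); lra.
  - pose proof (f_equal (Rmult x1) Hxy); lra.
Qed.

Lemma lin_app_prescribed u v u' v' : det2 u v <> 0 ->
  exists a b c d, lin_app a b c d u = u' /\ lin_app a b c d v = v'.
Proof.
  intros Huv.
  destruct u as [u1 u2], v as [v1 v2], u' as [s1 s2], v' as [t1 t2].
  unfold det2 in Huv; simpl in Huv.
  exists ((s1 * v2 - t1 * u2) / (u1 * v2 - u2 * v1)),
         ((t1 * u1 - s1 * v1) / (u1 * v2 - u2 * v1)),
         ((s2 * v2 - t2 * u2) / (u1 * v2 - u2 * v1)),
         ((t2 * u1 - s2 * v1) / (u1 * v2 - u2 * v1)).
  split; pt_field; exact Huv.
Qed.

Lemma exists_reflection x y : det2 x y <> 0 ->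
  exists a b c d,
    lin_app a b c d (padd x y) = popp (padd x y) /\
    lin_app a b c d (psub y x) = psub y x /\
    a * d - b * c = -1 /\ lin_app a b c d x = popp y.
Proof.
  intros Hxy. pose proof (det2_sum_diff x y) as Huv.
  destruct (lin_app_prescribed (padd x y) (psub y x) (popp (padd x y)) (psub y x))
    as [a [b [c [d [E1 E2]]]]]; [rewrite Huv; lra|].
  exists a, b, c, d. repeat split; auto.
  - pose proof (det2_lin_app a b c d (padd x y) (psub y x)) as Hdet.
    rewrite E1, E2, Huv in Hdet.
    replace (det2 (popp (padd x y)) (psub y x)) with (- (2 * det2 x y)) in Hdet
      by (destruct x, y; unfold det2, popp, padd, psub; simpl; ring).
    apply (Rmult_eq_reg_r (2 * det2 x y)); lra.
  - destruct x as [x1 x2], y as [y1 y2].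
    unfold lin_app, padd, psub, popp in *; simpl in *.
    injection E1 as E11 E12; injection E2 as E21 E22. f_equal; lra.
Qed.

(** * Radial structure of a symmetric convex body *)

Definition radial_boundary (K : pt -> Prop) (x : pt) : Prop :=
  K x /\ forall l, 1 < l -> ~ K (pscal l x).

Section SymmetricConvexBody.

Variable K : pt -> Prop.
Hypothesis K_convex : is_convex K.
Hypothesis K_interior : nonempty_interior K.
Hypothesis K_sym : centrally_symmetric K.

(* A ball inside [K] centred at [p] also fits at [-p], hence, by convexity, at [0]. *)
Lemma ball0_sub : exists r, 0 < r /\ forall q, pnorm q < r -> K q.
Proof.
  destruct K_interior as [p [r [Hr Hball]]]. exists r; split; auto. intros q Hq.
  assert (Kpq : K (padd p q)).
  { apply Hball. unfold pdist. replace (psub (padd p q) p) with q by pt_field. exact Hq. }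
  assert (Kqp : K (popp (psub p q))).
  { apply K_sym, Hball. unfold pdist.
    replace (psub (psub p q) p) with (pscal (-1) q) by pt_field.
    rewrite pnorm_scal, Rabs_left by lra. lra. }
  replace q with (padd (pscal (1 - / 2) (padd p q)) (pscal (/ 2) (popp (psub p q))))
    by pt_field.
  apply K_convex; auto; lra.
Qed.

Lemma zero_mem : K (0, 0).
Proof.
  destruct ball0_sub as [r [Hr Hball]]. apply Hball.
  rewrite pnorm_lt_iff by exact Hr. unfold nsq; simpl; nra.
Qed.

Lemma pscal_mem l w : K w -> 0 <= l <= 1 -> K (pscal l w).
Proof.
  intros Kw Hl. replace (pscal l w) with (padd (pscal (1 - l) (0, 0)) (pscal l w)) by pt_field.
  apply K_convex; auto using zero_mem.
Qed.

Lemma interior_pscal l y : K y -> 0 <= l < 1 -> interior_pt K (pscal l y).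
Proof.
  intros Ky Hl. destruct ball0_sub as [r [Hr Hball]].
  exists ((1 - l) * r). split; [nra|]. intros q Hq.
  set (z := pscal (/ (1 - l)) (psub q (pscal l y))).
  assert (Kz : K z).
  { apply Hball. unfold z. rewrite pnorm_scal, Rabs_right
      by (apply Rle_ge, Rlt_le, Rinv_0_lt_compat; lra).
    unfold pdist in Hq. apply (Rmult_lt_reg_l (1 - l)); [lra|].
    rewrite <- Rmult_assoc, Rinv_r by lra. lra. }
  replace q with (padd (pscal (1 - l) z) (pscal l y)) by (unfold z; pt_field; lra).
  apply K_convex; auto; lra.
Qed.

Lemma radial_boundary_boundary x : radial_boundary K x -> boundary_pt K x.
Proof.
  intros [Kx Hout]. split.
  - intros r Hr. exists x. split; auto. unfold pdist.
    replace (psub x x) with (pscal 0 x) by pt_field. rewrite pnorm_scal, Rabs_R0; lra.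
  - intros [r [Hr Hball]].
    destruct (Req_dec (pnorm x) 0) as [Hx0|Hx0].
    + apply (Hout 2); [lra|]. apply Hball. unfold pdist.
      replace (psub (pscal 2 x) x) with x by pt_field. lra.
    + assert (Hx : 0 < pnorm x) by (pose proof (pnorm_ge0 x); lra).
      assert (Hrx : 0 < r / (2 * pnorm x)) by (apply Rdiv_lt_0_compat; lra).
      apply (Hout (1 + r / (2 * pnorm x))); [lra|].
      apply Hball. unfold pdist.
      replace (psub (pscal (1 + r / (2 * pnorm x)) x) x) with (pscal (r / (2 * pnorm x)) x)
        by (pt_field; lra).
      rewrite pnorm_scal, Rabs_right by lra.
      replace (r / (2 * pnorm x) * pnorm x) with (r / 2) by (field; lra). lra.
Qed.

Hypothesis K_closed : is_closed K.

Lemma boundary_radial x : boundary_pt K x -> radial_boundary K x.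
Proof.
  intros [Hcl Hnint]. split; [now apply K_closed|]. intros l Hl Klx. apply Hnint.
  replace x with (pscal (/ l) (pscal l x)) by (pt_field; lra).
  apply interior_pscal; auto. split.
  - apply Rlt_le, Rinv_0_lt_compat; lra.
  - rewrite <- Rinv_1. apply Rinv_lt_contravar; lra.
Qed.

Lemma radial_boundary_neq0 x : radial_boundary K x -> x <> (0, 0).
Proof.
  intros [Kx Hout] ->. apply (Hout 2); [lra|].
  replace (pscal 2 (0, 0)) with (0, 0) by pt_field. exact Kx.
Qed.

Lemma radial_boundary_popp x : radial_boundary K x -> radial_boundary K (popp x).
Proof.
  intros [Kx Hout]. split; auto. intros l Hl Klx. apply (Hout l Hl).
  replace (pscal l x) with (popp (pscal l (popp x))) by pt_field. auto.
Qed.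

Lemma radial_boundary_ray x t :
  radial_boundary K x -> radial_boundary K (pscal t x) -> 0 < t -> t = 1.
Proof.
  intros [Kx Hx] [Ktx Htx] Ht.
  destruct (Rtotal_order t 1) as [Hlt|[Heq|Hgt]]; auto; exfalso.
  - apply (Htx (/ t)).
    + rewrite <- Rinv_1. apply Rinv_lt_contravar; lra.
    + replace (pscal (/ t) (pscal t x)) with x by (pt_field; lra). exact Kx.
  - exact (Hx t Hgt Ktx).
Qed.

Lemma boundary_collinear x y : boundary_pt K x -> boundary_pt K y ->
  det2 x y = 0 -> y = x \/ y = popp x.
Proof.
  intros Hx Hy Hxy. apply boundary_radial in Hx, Hy.
  destruct (collinear_pscal x y Hxy (radial_boundary_neq0 x Hx)) as [t ->].
  destruct (Rtotal_order t 0) as [Hneg|[Hz|Hpos]].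
  - right. apply radial_boundary_popp in Hy.
    replace (popp (pscal t x)) with (pscal (- t) x) in Hy by pt_field.
    replace t with (- 1) by (pose proof (radial_boundary_ray x (- t) Hx Hy); lra).
    pt_field.
  - subst t. exfalso. apply (radial_boundary_neq0 _ Hy). pt_field.
  - left. rewrite (radial_boundary_ray x t Hx Hy Hpos). pt_field.
Qed.

Hypothesis K_bounded : is_bounded K.

Lemma exists_boundary_on_ray w : w <> (0, 0) ->
  exists t, 0 < t /\ boundary_pt K (pscal t w).
Proof.
  intros Hw. destruct K_bounded as [M HM]. destruct ball0_sub as [r0 [Hr0 Hball]].
  assert (Hnw : 0 < pnorm w) by (apply pnorm_pos; exact Hw).
  set (E := fun t => 0 <= t /\ K (pscal t w)).
  assert (E_bound : bound E).
  { exists (M / pnorm w). intros t [Ht Kt]. apply HM in Kt.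
    rewrite pnorm_scal, Rabs_right in Kt by lra.
    apply (Rmult_le_reg_r (pnorm w)); [lra|]. unfold Rdiv. rewrite Rmult_assoc, Rinv_l; lra. }
  set (t0 := r0 / (2 * pnorm w)).
  assert (Ht0 : 0 < t0) by (apply Rdiv_lt_0_compat; lra).
  assert (E_t0 : E t0).
  { split; [lra|]. apply Hball. rewrite pnorm_scal, Rabs_right by lra.
    unfold t0. replace (r0 / (2 * pnorm w) * pnorm w) with (r0 / 2) by (field; lra). lra. }
  destruct (completeness E E_bound (ex_intro _ _ E_t0)) as [ts [Hub Hlub]].
  assert (Hts : 0 < ts) by (pose proof (Hub t0 E_t0); lra).
  exists ts. split; [exact Hts|]. apply radial_boundary_boundary. split.
  - apply K_closed. intros e He.
    assert (Hew : 0 < e / pnorm w) by (apply Rdiv_lt_0_compat; lra).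
    destruct (classic (exists t, E t /\ ts - e / pnorm w < t)) as [[t [[Ht Kt] Hlt]]|Hnone].
    + exists (pscal t w). split; [exact Kt|]. unfold pdist.
      replace (psub (pscal t w) (pscal ts w)) with (pscal (t - ts) w) by pt_field.
      assert (t <= ts) by (apply Hub; split; auto).
      rewrite pnorm_scal, Rabs_left1 by lra.
      apply (Rmult_lt_reg_r (/ pnorm w)); [apply Rinv_0_lt_compat; lra|].
      replace (- (t - ts) * pnorm w * / pnorm w) with (ts - t) by (field; lra). unfold Rdiv in Hlt. lra.
    + assert (ts <= ts - e / pnorm w); [|lra].
      apply Hlub. intros t Et. apply Rnot_lt_le. intros Hlt. apply Hnone. exists t; auto.
  - intros l Hl Klt.
    assert (l * ts <= ts); [|nra].
    apply Hub. split; [nra|].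
    replace (pscal (l * ts) w) with (pscal l (pscal ts w)) by pt_field. exact Klt.
Qed.

Lemma sublevel_of_boundary_level (Q : pt -> R) c :
  (forall t v, Q (pscal t v) = t ^ 2 * Q v) ->
  (forall v, v <> (0, 0) -> 0 < Q v) ->
  (forall x, boundary_pt K x -> Q x = c) ->
  forall w, K w <-> Q w <= c.
Proof.
  intros Q_scal Q_pos Q_bd w.
  assert (Q0 : Q (0, 0) = 0).
  { replace (0, 0) with (pscal 0 (0, 0)) by pt_field. rewrite Q_scal. ring. }
  destruct (classic (w = (0, 0))) as [->|Hw].
  - rewrite Q0. split; intros _; [|exact zero_mem].
    destruct (exists_boundary_on_ray (1, 0)) as [t [_ Hb]]; [intros E; injection E; lra|].
    rewrite <- (Q_bd _ Hb). apply Rlt_le, Q_pos, radial_boundary_neq0, boundary_radial, Hb.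
  - destruct (exists_boundary_on_ray w Hw) as [t [Ht Hb]].
    pose proof (Q_bd _ Hb) as Hc. rewrite Q_scal in Hc.
    destruct (boundary_radial _ Hb) as [_ Hout].
    pose proof (Q_pos w Hw) as HQw.
    assert (Hwt : w = pscal (/ t) (pscal t w)) by (pt_field; lra).
    split; intros H.
    + destruct (Rlt_or_le t 1) as [Hlt|Hge].
      * exfalso. apply (Hout (/ t)).
        -- rewrite <- Rinv_1. apply Rinv_lt_contravar; lra.
        -- rewrite <- Hwt. exact H.
      * assert (1 <= t ^ 2) by nra. rewrite <- Hc. nra.
    + assert (Ht1 : 1 <= t).
      { apply Rnot_lt_le. intros Hlt. assert (t ^ 2 < 1) by nra. nra. }
      rewrite Hwt. apply pscal_mem; [now apply K_closed, Hb|]. split.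
      * apply Rlt_le, Rinv_0_lt_compat; lra.
      * rewrite <- Rinv_1. apply Rinv_le_contravar; lra.
Qed.

End SymmetricConvexBody.

Lemma level_of_sublevel (K : pt -> Prop) (Q : pt -> R) x :
  (forall t v, Q (pscal t v) = t ^ 2 * Q v) -> (forall v, 0 <= Q v) ->
  (forall w, K w <-> Q w <= 1) -> radial_boundary K x -> Q x = 1.
Proof.
  intros Q_scal Q_ge0 HK [Kx Hout]. apply HK in Kx.
  destruct (Rle_lt_or_eq_dec _ _ Kx) as [Hlt|]; [exfalso|assumption].
  pose proof (Q_ge0 x).
  (* [l = 2 / (1 + Q x)] pushes [x] outwards while keeping [Q (l x) <= 1] *)
  apply (Hout (2 / (1 + Q x))).
  - apply (Rmult_lt_reg_r (1 + Q x)); [lra|]. field_simplify; lra.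
  - apply HK. rewrite Q_scal.
    apply (Rmult_le_reg_r ((1 + Q x) ^ 2)); [nra|]. field_simplify; nra.
Qed.

Definition qf (A B C : R) (v : pt) : R :=
  A * fst v ^ 2 + 2 * B * fst v * snd v + C * snd v ^ 2.
Definition qb (A B C : R) (u v : pt) : R :=
  A * fst u * fst v + B * (fst u * snd v + snd u * fst v) + C * snd u * snd v.

Lemma qf_pscal A B C t v : qf A B C (pscal t v) = t ^ 2 * qf A B C v.
Proof. destruct v; unfold qf, pscal; cbn [fst snd]; ring. Qed.

Lemma qf_popp A B C v : qf A B C (popp v) = qf A B C v.
Proof. destruct v; unfold qf, popp; cbn [fst snd]; ring. Qed.

Lemma qf_padd A B C u v s t :
  qf A B C (padd (pscal s u) (pscal t v)) =
  s ^ 2 * qf A B C u + 2 * s * t * qb A B C u v + t ^ 2 * qf A B C v.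
Proof. destruct u, v; unfold qf, qb, padd, pscal; cbn [fst snd]; ring. Qed.

Lemma qb_sum_diff A B C x y :
  qb A B C (padd x y) (psub y x) = qf A B C y - qf A B C x.
Proof. destruct x, y; unfold qf, qb, padd, psub; cbn [fst snd]; ring. Qed.

Lemma qf_pos A B C v : 0 < A -> 0 < A * C - B * B -> v <> (0, 0) -> 0 < qf A B C v.
Proof.
  intros HA HD Hv. destruct v as [x y]; unfold qf; cbn [fst snd].
  assert (Hsq : A * (A * x ^ 2 + 2 * B * x * y + C * y ^ 2) = (A * x + B * y) ^ 2 + (A * C - B * B) * y ^ 2)
    by ring.
  destruct (Req_dec y 0) as [->|Hy].
  - assert (Hx : x <> 0) by (intros ->; now apply Hv).
    pose proof (pow2_pos x Hx). nra.
  - pose proof (pow2_pos y Hy). pose proof (pow2_ge_0 (A * x + B * y)). nra.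
Qed.

Lemma qf_lin_app_invariant A B C a b c d u v :
  det2 u v <> 0 -> qb A B C u v = 0 ->
  lin_app a b c d u = popp u -> lin_app a b c d v = v ->
  forall w, qf A B C (lin_app a b c d w) = qf A B C w.
Proof.
  intros Huv Hqb Hu Hv w.
  assert (Hw := det2_decomp u v w).
  assert (HTw : pscal (det2 u v) (lin_app a b c d w) =
                padd (pscal (- det2 w v) u) (pscal (det2 u w) v)).
  { rewrite <- lin_app_pscal, Hw, lin_app_padd, !lin_app_pscal, Hu, Hv. pt_field. }
  apply (Rmult_eq_reg_l (det2 u v ^ 2)); [|apply pow_nonzero, Huv].
  rewrite <- !qf_pscal, HTw, Hw, !qf_padd, Hqb. ring.
Qed.

Lemma ellipse_reflection_invariant (K : pt -> Prop) :
  is_closed K -> is_convex K -> nonempty_interior K -> centrally_symmetric K ->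
  is_ellipse K ->
  forall x y : pt, boundary_pt K x -> boundary_pt K y ->
     x <> y -> x <> popp y ->
     forall a b c d : R,
       lin_app a b c d (padd x y) = popp (padd x y) ->
       lin_app a b c d (psub y x) = psub y x ->
       forall p, K p -> K (lin_app a b c d p).
Proof.
  intros Hcl Hconv Hint Hsym [A [B [C [HA [HD HK]]]]] x y Hx Hy Hxy Hxy' a b c d E1 E2 p Kp.
  assert (HKq : forall w, K w <-> qf A B C w <= 1) by exact HK.
  assert (level : forall z, boundary_pt K z -> qf A B C z = 1).
  { intros z Hz. apply (level_of_sublevel K); auto using qf_pscal.
    - intros v. destruct (classic (v = (0, 0))) as [->|Hv].
      + unfold qf; cbn [fst snd]; lra.
      + now apply Rlt_le, qf_pos.
    - now apply boundary_radial. }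
  assert (Hdet : det2 x y <> 0).
  { intros H0. destruct (boundary_collinear K Hconv Hint Hsym Hcl x y Hx Hy H0) as [->| ->].
    - now apply Hxy.
    - apply Hxy'. destruct x; unfold popp; cbn [fst snd]; f_equal; ring. }
  apply HKq. rewrite (qf_lin_app_invariant A B C a b c d (padd x y) (psub y x)); auto.
  - now apply HKq.
  - rewrite det2_sum_diff. lra.
  - rewrite qb_sum_diff, !level; auto. ring.
Qed.

(** * The inscribed ellipse of maximal area *)

Definition sdet (p q r : R) : R := p * r - q * q.

Definition inscribed (K : pt -> Prop) (p q r : R) : Prop :=
  0 < p /\ 0 < sdet p q r /\ forall v, nsq v <= 1 -> K (lin_app p q q r v).

Lemma sdet_mixed_nonneg p1 q1 r1 p2 q2 r2 :
  0 < p1 -> 0 < sdet p1 q1 r1 -> 0 < p2 -> 0 < sdet p2 q2 r2 ->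
  0 <= p1 * r2 + p2 * r1 - 2 * q1 * q2.
Proof.
  unfold sdet; intros Hp1 Hd1 Hp2 Hd2.
  assert (0 < r1) by nra. assert (0 < r2) by nra.
  assert ((2 * q1 * q2) ^ 2 <= (p1 * r2 + p2 * r1) ^ 2).
  { assert (0 <= q1 * q1) by nra. assert (0 <= q2 * q2) by nra.
    assert (q1 * q1 * (q2 * q2) <= p1 * r1 * (p2 * r2)) by (apply Rmult_le_compat; lra).
    pose proof (pow2_ge_0 (p1 * r2 - p2 * r1)). nra. }
  assert (0 < p1 * r2 + p2 * r1) by nra.
  destruct (Rle_or_lt (2 * q1 * q2) 0); nra.
Qed.

(* For [A = [[a, b], [b, c]]] positive definite and [D = [[al, be], [be, ga]]],
   [rel_dev] equals [det(A)^2 tr((A^-1 D)^2)]: the size of [D] measured by [A]. *)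
Definition rel_dev (a b c al be ga : R) : R :=
  (a * ga + c * al - 2 * b * be) ^ 2 - 2 * sdet a b c * (al * ga - be * be).

Lemma rel_dev_bound_l a b c al be ga : 0 < a -> 0 < sdet a b c ->
  sdet a b c ^ 2 * al ^ 2 <= a ^ 2 * rel_dev a b c al be ga.
Proof.
  unfold rel_dev, sdet; intros Ha Hd.
  assert (E : a ^ 2 * ((a * ga + c * al - 2 * b * be) ^ 2 - 2 * (a * c - b * b) * (al * ga - be * be))
    - (a * c - b * b) ^ 2 * al ^ 2
    = 2 * (a * c - b * b) * (a * be - b * al) ^ 2 + (b * b * al - 2 * a * b * be + a * a * ga) ^ 2)
    by ring.
  pose proof (pow2_ge_0 (a * be - b * al)). pose proof (pow2_ge_0 (b * b * al - 2 * a * b * be + a * a * ga)).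
  nra.
Qed.

Lemma rel_dev_bounds a b c al be ga : 0 < a -> 0 < sdet a b c ->
  sdet a b c ^ 2 * al ^ 2 <= a ^ 2 * rel_dev a b c al be ga /\
  sdet a b c ^ 2 * ga ^ 2 <= c ^ 2 * rel_dev a b c al be ga /\
  2 * sdet a b c * be ^ 2 <= rel_dev a b c al be ga + sdet a b c * (al ^ 2 + ga ^ 2).
Proof.
  intros Ha Hd. split; [|split].
  - now apply rel_dev_bound_l.
  - assert (Hc : 0 < c) by (unfold sdet in Hd; nra).
    replace (sdet a b c) with (sdet c b a) by (unfold sdet; ring).
    replace (rel_dev a b c al be ga) with (rel_dev c b a ga be al) by (unfold rel_dev, sdet; ring).
    apply rel_dev_bound_l; [exact Hc|unfold sdet in *; lra].
  - unfold rel_dev. pose proof (pow2_ge_0 (a * ga + c * al - 2 * b * be)).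
    pose proof (pow2_ge_0 (al - ga)). nra.
Qed.

Lemma rel_dev_sum_diff_le s eps p1 q1 r1 p2 q2 r2 :
  0 <= eps <= s / 2 -> 0 < p1 -> 0 < p2 -> 0 < sdet p1 q1 r1 -> 0 < sdet p2 q2 r2 ->
  s - eps <= sdet p1 q1 r1 <= s -> s - eps <= sdet p2 q2 r2 <= s ->
  sdet ((p1 + p2) / 2) ((q1 + q2) / 2) ((r1 + r2) / 2) <= s ->
  s <= sdet (p1 + p2) (q1 + q2) (r1 + r2) /\
  rel_dev (p1 + p2) (q1 + q2) (r1 + r2) (p1 - p2) (q1 - q2) (r1 - r2) <= 34 * s * eps.
Proof.
  intros Heps Hp1 Hp2 Hq1 Hq2 Hd1 Hd2 Hmid.
  pose proof (sdet_mixed_nonneg _ _ _ _ _ _ Hp1 Hq1 Hp2 Hq2) as Hmixed.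
  set (dA := sdet (p1 + p2) (q1 + q2) (r1 + r2)).
  assert (HdA_ub : dA <= 4 * s)
    by (replace dA with (4 * sdet ((p1 + p2) / 2) ((q1 + q2) / 2) ((r1 + r2) / 2))
          by (unfold dA, sdet; field); lra).
  assert (HdA_lb : s <= dA)
    by (replace dA with (sdet p1 q1 r1 + sdet p2 q2 r2 + (p1 * r2 + p2 * r1 - 2 * q1 * q2))
          by (unfold dA, sdet; ring); lra).
  split; [exact HdA_lb|].
  unfold rel_dev. fold dA.
  replace ((p1 + p2) * (r1 - r2) + (r1 + r2) * (p1 - p2) - 2 * (q1 + q2) * (q1 - q2))
    with (2 * (sdet p1 q1 r1 - sdet p2 q2 r2)) by (unfold sdet; ring).
  replace ((p1 - p2) * (r1 - r2) - (q1 - q2) * (q1 - q2))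
    with (2 * (sdet p1 q1 r1 + sdet p2 q2 r2) - dA) by (unfold dA, sdet; ring).
  nra.
Qed.

Lemma Cauchy_crit_sq (u : nat -> R) :
  (forall e, 0 < e -> exists N, forall n m, (N <= n)%nat -> (N <= m)%nat -> (u n - u m) ^ 2 <= e) ->
  Cauchy_crit u.
Proof.
  intros Hu eps Heps. destruct (Hu (eps ^ 2 / 2)) as [N HN]; [nra|].
  exists N. intros n m Hn Hm. specialize (HN n m Hn Hm). unfold R_dist.
  apply Rabs_def1; nra.
Qed.

Lemma inv_INR_S_small eps : 0 < eps -> exists N, forall n, (N <= n)%nat -> / INR (S n) <= eps.
Proof.
  intros Heps. destruct (archimed_cor1 eps Heps) as [N [HN HN0]]. exists N. intros n Hn.
  apply le_INR in Hn. rewrite S_INR. pose proof (lt_0_INR N ltac:(lia)).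
  apply Rlt_le, (Rle_lt_trans _ (/ INR N)); [apply Rinv_le_contravar|]; lra.
Qed.

Lemma Un_cv_ge u l c : Un_cv u l -> (forall n, c - / INR (S n) <= u n) -> c <= l.
Proof.
  intros Hu Hc. apply Rnot_lt_le. intros Hlt.
  destruct (Hu ((c - l) / 2)) as [N1 HN1]; [lra|].
  destruct (inv_INR_S_small ((c - l) / 2)) as [N2 HN2]; [lra|].
  specialize (HN1 (max N1 N2) ltac:(lia)). specialize (HN2 (max N1 N2) ltac:(lia)).
  specialize (Hc (max N1 N2)). unfold R_dist in HN1. apply Rabs_def2 in HN1. lra.
Qed.

Section NearMaximal.

Variables (K : pt -> Prop) (M s : R).
Hypothesis K_convex : is_convex K.
Hypothesis K_bound : forall z, K z -> pnorm z <= M.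
Hypothesis s_pos : 0 < s.
Hypothesis s_ub : forall p q r, inscribed K p q r -> sdet p q r <= s.

Lemma inscribed_mid p1 q1 r1 p2 q2 r2 :
  inscribed K p1 q1 r1 -> inscribed K p2 q2 r2 ->
  inscribed K ((p1 + p2) / 2) ((q1 + q2) / 2) ((r1 + r2) / 2).
Proof.
  intros [Hp1 [Hd1 HK1]] [Hp2 [Hd2 HK2]].
  pose proof (sdet_mixed_nonneg _ _ _ _ _ _ Hp1 Hd1 Hp2 Hd2).
  split; [lra|split; [unfold sdet in *; nra|]].
  intros v Hv. pose proof (K_convex _ _ (/ 2) (HK1 v Hv) (HK2 v Hv) ltac:(lra)) as Hmid.
  replace (lin_app _ _ _ _ v) with
    (padd (pscal (1 - / 2) (lin_app p1 q1 q1 r1 v)) (pscal (/ 2) (lin_app p2 q2 q2 r2 v)))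
    by pt_field.
  exact Hmid.
Qed.

Lemma inscribed_diag_le p q r : inscribed K p q r -> p <= M /\ r <= M.
Proof.
  intros [_ [_ HK]]. split.
  - pose proof (K_bound _ (HK (1, 0) ltac:(unfold nsq; simpl; lra))) as H.
    replace (lin_app p q q r (1, 0)) with (p, q) in H by pt_field.
    pose proof (coord_le_pnorm p q); lra.
  - pose proof (K_bound _ (HK (0, 1) ltac:(unfold nsq; simpl; lra))) as H.
    replace (lin_app p q q r (0, 1)) with (q, r) in H by pt_field.
    pose proof (coord_le_pnorm q r); lra.
Qed.

(* The midpoint of the two ellipses is inscribed as well, and [sdet] is strictly concave along
   segments. *)
Lemma near_max_close : exists C, 0 < C /\
  forall eps p1 q1 r1 p2 q2 r2, 0 <= eps <= s / 2 ->
  inscribed K p1 q1 r1 -> inscribed K p2 q2 r2 ->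
  s - eps <= sdet p1 q1 r1 -> s - eps <= sdet p2 q2 r2 ->
  (p1 - p2) ^ 2 + (q1 - q2) ^ 2 + (r1 - r2) ^ 2 <= C * eps.
Proof.
  exists (17 + 408 * M ^ 2 / s). split.
  { assert (0 <= M ^ 2 / s) by (apply Rmult_le_pos; [apply pow2_ge_0|apply Rlt_le, Rinv_0_lt_compat; lra]). lra. }
  intros eps p1 q1 r1 p2 q2 r2 Heps F1 F2 Hd1 Hd2.
  pose proof (s_ub _ _ _ F1) as Hs1. pose proof (s_ub _ _ _ F2) as Hs2.
  pose proof (s_ub _ _ _ (inscribed_mid _ _ _ _ _ _ F1 F2)) as Hsmid.
  destruct (inscribed_diag_le _ _ _ F1) as [Hp1M Hr1M].
  destruct (inscribed_diag_le _ _ _ F2) as [Hp2M Hr2M].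
  pose proof F1 as [Hp1 [Hq1 _]]. pose proof F2 as [Hp2 [Hq2 _]].
  assert (Hr1 : 0 < r1) by (unfold sdet in Hq1; nra).
  assert (Hr2 : 0 < r2) by (unfold sdet in Hq2; nra).
  destruct (rel_dev_sum_diff_le s eps p1 q1 r1 p2 q2 r2) as [HdA_lb HW]; auto.
  set (a := p1 + p2) in *. set (b := q1 + q2) in *. set (c := r1 + r2) in *.
  set (al := p1 - p2) in *. set (be := q1 - q2) in *. set (ga := r1 - r2) in *.
  set (dA := sdet a b c) in *. set (W := rel_dev a b c al be ga) in *.
  destruct (rel_dev_bounds a b c al be ga ltac:(unfold a; lra) ltac:(fold dA; lra))
    as [Bal [Bga Bbe]].
  fold dA W in Bal, Bga, Bbe.
  assert (HW0 : 0 <= W).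
  { assert (0 < a ^ 2) by (apply pow_lt; unfold a; lra).
    pose proof (pow2_ge_0 (dA * al)). nra. }
  assert (Hdiag : forall x X, 0 < X <= 2 * M -> dA ^ 2 * x ^ 2 <= X ^ 2 * W ->
                             s * x ^ 2 <= 136 * M ^ 2 * eps).
  { intros x X HX Hx. apply (Rmult_le_reg_l s); [exact s_pos|].
    assert (s ^ 2 * x ^ 2 <= dA ^ 2 * x ^ 2)
      by (apply Rmult_le_compat_r; [apply pow2_ge_0|nra]).
    assert (X ^ 2 * W <= 4 * M ^ 2 * (34 * s * eps))
      by (apply Rmult_le_compat; nra).
    nra. }
  pose proof (Hdiag al a ltac:(unfold a; lra) Bal) as Hal.
  pose proof (Hdiag ga c ltac:(unfold c; lra) Bga) as Hga.
  assert (Hbe : s * be ^ 2 <= 17 * s * eps + 136 * M ^ 2 * eps).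
  { apply (Rmult_le_reg_l (2 * dA)); [lra|].
    assert (Hx : 2 * dA * (s * be ^ 2) <= s * (W + dA * (al ^ 2 + ga ^ 2)))
      by (rewrite <- Rmult_assoc, (Rmult_comm _ s), Rmult_assoc; apply Rmult_le_compat_l; lra).
    nra. }
  apply (Rmult_le_reg_l s); [exact s_pos|].
  replace (s * ((17 + 408 * M ^ 2 / s) * eps)) with (17 * s * eps + 408 * M ^ 2 * eps)
    by (field; lra).
  fold al be ga. lra.
Qed.

Lemma near_max_seq_cauchy (pn qn rn : nat -> R) :
  (forall n, inscribed K (pn n) (qn n) (rn n)) ->
  (forall n, s - / INR (S n) <= sdet (pn n) (qn n) (rn n)) ->
  Cauchy_crit pn /\ Cauchy_crit qn /\ Cauchy_crit rn.
Proof.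
  intros HF HD. destruct near_max_close as [C [HC Hclose]].
  assert (Hcauchy : forall e, 0 < e -> exists N, forall n m, (N <= n)%nat -> (N <= m)%nat ->
            (pn n - pn m) ^ 2 + (qn n - qn m) ^ 2 + (rn n - rn m) ^ 2 <= e).
  { intros e He. destruct (inv_INR_S_small (Rmin (s / 2) (e / C))) as [N HN].
    { apply Rmin_pos; [lra|apply Rdiv_lt_0_compat; lra]. }
    exists N. intros n m Hn Hm.
    pose proof (HN N (Nat.le_refl N)) as HNe.
    pose proof (Rmin_l (s / 2) (e / C)). pose proof (Rmin_r (s / 2) (e / C)).
    assert (Htail : forall k, (N <= k)%nat -> s - / INR (S N) <= sdet (pn k) (qn k) (rn k)).
    { intros k Hk. pose proof (HD k). apply le_INR in Hk. rewrite !S_INR in *.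
      pose proof (pos_INR N).
      assert (/ (INR k + 1) <= / (INR N + 1)) by (apply Rinv_le_contravar; lra). lra. }
    pose proof (RinvN_pos N). rewrite <- S_INR in *. set (eps := / INR (S N)) in *.
    eapply Rle_trans; [apply (Hclose eps); auto; lra|].
    apply (Rmult_le_reg_r (/ C)); [apply Rinv_0_lt_compat; lra|].
    replace (C * eps * / C) with eps by (field; lra). unfold Rdiv in *. lra. }
  assert (Hcoord : forall u : nat -> R,
            (forall n m, (u n - u m) ^ 2 <= (pn n - pn m) ^ 2 + (qn n - qn m) ^ 2 + (rn n - rn m) ^ 2) ->
            Cauchy_crit u).
  { intros u Hu. apply Cauchy_crit_sq. intros e He. destruct (Hcauchy e He) as [N HN].
    exists N. intros n m Hn Hm. eapply Rle_trans; [apply Hu|]. auto. }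
  split; [|split]; apply Hcoord; intros n m;
    pose proof (pow2_ge_0 (pn n - pn m)); pose proof (pow2_ge_0 (qn n - qn m));
    pose proof (pow2_ge_0 (rn n - rn m)); lra.
Qed.

End NearMaximal.

Section MaximalEllipse.

Variable K : pt -> Prop.
Hypothesis K_closed : is_closed K.
Hypothesis K_bounded : is_bounded K.
Hypothesis K_convex : is_convex K.
Hypothesis K_interior : nonempty_interior K.
Hypothesis K_sym : centrally_symmetric K.

Lemma inscribed_limit (pn qn rn : nat -> R) p q r :
  (forall n, inscribed K (pn n) (qn n) (rn n)) ->
  Un_cv pn p -> Un_cv qn q -> Un_cv rn r -> 0 < sdet p q r -> inscribed K p q r.
Proof.
  intros HF HP HQ HR Hd.
  assert (Hp0 : 0 <= p).
  { apply (Un_cv_ge pn p 0 HP). intros n. destruct (HF n) as [Hp _].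
    pose proof (RinvN_pos n) as Hn. rewrite <- S_INR in Hn. lra. }
  assert (Hp : 0 < p) by (destruct (Rle_lt_or_eq_dec _ _ Hp0); [lra|subst; unfold sdet in Hd; nra]).
  split; [exact Hp|split; [exact Hd|]]. intros [v1 v2] Hv. apply K_closed. intros e He.
  destruct (HP (e / 4)) as [N1 HN1]; [lra|].
  destruct (HQ (e / 4)) as [N2 HN2]; [lra|].
  destruct (HR (e / 4)) as [N3 HN3]; [lra|].
  set (n := max N1 (max N2 N3)).
  specialize (HN1 n ltac:(unfold n; lia)). specialize (HN2 n ltac:(unfold n; lia)).
  specialize (HN3 n ltac:(unfold n; lia)). unfold R_dist in HN1, HN2, HN3.
  destruct (HF n) as [_ [_ HKn]].
  exists (lin_app (pn n) (qn n) (qn n) (rn n) (v1, v2)). split; [now apply HKn|].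
  unfold pdist, psub, lin_app; cbn [fst snd]. eapply Rle_lt_trans; [apply pnorm_le_abs|].
  unfold nsq in Hv; cbn [fst snd] in Hv.
  assert (Hv1 : Rabs v1 <= 1) by (apply Rabs_le; nra).
  assert (Hv2 : Rabs v2 <= 1) by (apply Rabs_le; nra).
  assert (Hlin : forall x y, Rabs (x * v1 + y * v2) <= Rabs x + Rabs y).
  { intros x y. eapply Rle_trans; [apply Rabs_triang|]. rewrite !Rabs_mult.
    pose proof (Rabs_pos x); pose proof (Rabs_pos y). nra. }
  replace (pn n * v1 + qn n * v2 - (p * v1 + q * v2)) with ((pn n - p) * v1 + (qn n - q) * v2) by ring.
  replace (qn n * v1 + rn n * v2 - (q * v1 + r * v2)) with ((qn n - q) * v1 + (rn n - r) * v2) by ring.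
  pose proof (Hlin (pn n - p) (qn n - q)). pose proof (Hlin (qn n - q) (rn n - r)). lra.
Qed.

Lemma inscribed_sdet_sup : exists s, 0 < s /\
  (forall p q r, inscribed K p q r -> sdet p q r <= s) /\
  (forall eps, 0 < eps -> exists p q r, inscribed K p q r /\ s - eps <= sdet p q r).
Proof.
  destruct K_bounded as [M HM].
  destruct (ball0_sub K K_convex K_interior K_sym) as [r0 [Hr0 Hball]].
  assert (disk : inscribed K (r0 / 2) 0 (r0 / 2)).
  { split; [lra|split; [unfold sdet; nra|]]. intros v Hv. apply Hball.
    apply pnorm_lt_iff; [exact Hr0|]. destruct v as [v1 v2].
    unfold nsq, lin_app in *; cbn [fst snd] in *. nra. }
  set (E := fun d => exists p q r, inscribed K p q r /\ d = sdet p q r).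
  assert (E_bound : bound E).
  { exists (M ^ 2). intros d [p [q [r [Hf ->]]]].
    destruct (inscribed_diag_le K M HM p q r Hf) as [HpM HrM].
    destruct Hf as [Hp [Hd _]]. unfold sdet in *. nra. }
  destruct (completeness E E_bound (ex_intro _ _ (ex_intro _ _ (ex_intro _ _ (ex_intro _ _
              (conj disk eq_refl)))))) as [s [Hub Hlub]].
  assert (s_ub : forall p q r, inscribed K p q r -> sdet p q r <= s)
    by (intros p q r Hf; apply Hub; exists p, q, r; auto).
  exists s. split; [|split; [exact s_ub|]].
  - pose proof (s_ub _ _ _ disk) as H0. unfold sdet in H0. nra.
  - intros eps Heps. apply NNPP. intros Hnone.
    assert (s <= s - eps); [|lra].
    apply Hlub. intros d [p [q [r [Hf ->]]]]. apply Rnot_lt_le. intros Hlt.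
    apply Hnone. exists p, q, r. split; [exact Hf|lra].
Qed.

Lemma exists_max_inscribed : exists p q r, inscribed K p q r /\
  forall p' q' r', inscribed K p' q' r' -> sdet p' q' r' <= sdet p q r.
Proof.
  pose proof K_bounded as [M HM].
  destruct inscribed_sdet_sup as [s [s_pos [s_ub s_approx]]].
  assert (near : forall n : nat, exists t : R * (R * R),
            inscribed K (fst t) (fst (snd t)) (snd (snd t)) /\
            s - / INR (S n) <= sdet (fst t) (fst (snd t)) (snd (snd t))).
  { intros n. destruct (s_approx (/ INR (S n))) as [p [q [r Hpqr]]].
    { rewrite S_INR. apply RinvN_pos. }
    now exists (p, (q, r)). }
  destruct (functional_choice _ near) as [f Hf].
  set (pn n := fst (f n)). set (qn n := fst (snd (f n))). set (rn n := snd (snd (f n))).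
  assert (HF : forall n, inscribed K (pn n) (qn n) (rn n)) by (intros n; apply Hf).
  assert (HD : forall n, s - / INR (S n) <= sdet (pn n) (qn n) (rn n)) by (intros n; apply Hf).
  destruct (near_max_seq_cauchy K M s K_convex HM s_pos s_ub pn qn rn HF HD) as [Cp [Cq Cr]].
  destruct (R_complete pn Cp) as [p Hp].
  destruct (R_complete qn Cq) as [q Hq].
  destruct (R_complete rn Cr) as [r Hr].
  assert (Hlim : s <= sdet p q r).
  { apply (Un_cv_ge (fun n => sdet (pn n) (qn n) (rn n))); [|exact HD].
    apply CV_minus; apply CV_mult; assumption. }
  exists p, q, r. split.
  - apply (inscribed_limit pn qn rn); auto. lra.
  - intros p' q' r' Hf'. pose proof (s_ub _ _ _ Hf'). lra.
Qed.

End MaximalEllipse.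

Lemma max_inscribed_unique K M p q r p' q' r' :
  is_convex K -> (forall z, K z -> pnorm z <= M) ->
  inscribed K p q r -> (forall p1 q1 r1, inscribed K p1 q1 r1 -> sdet p1 q1 r1 <= sdet p q r) ->
  inscribed K p' q' r' -> sdet p' q' r' = sdet p q r -> p' = p /\ q' = q /\ r' = r.
Proof.
  intros Hconv HM Hf Hmax Hf' Hd. pose proof Hf as [_ [Hpos _]].
  destruct (near_max_close K M (sdet p q r) Hconv HM Hpos Hmax) as [C [_ Hclose]].
  pose proof (Hclose 0 p q r p' q' r' ltac:(lra) Hf Hf' ltac:(lra) ltac:(lra)) as H0.
  pose proof (pow2_ge_0 (p - p')). pose proof (pow2_ge_0 (q - q')). pose proof (pow2_ge_0 (r - r')).
  assert (Hsq : forall x, x ^ 2 = 0 -> x = 0).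
  { intros x Hx. destruct (Req_dec x 0) as [|Hx0]; [assumption|].
    pose proof (pow2_pos x Hx0). lra. }
  repeat split; symmetry; apply Rminus_diag_uniq, Hsq; lra.
Qed.

Section Reflections.

Variables c s : R.
Hypothesis unit_cs : c ^ 2 + s ^ 2 = 1.

Lemma nsq_reflection v : nsq (lin_app c (- s) (- s) (- c) v) = nsq v.
Proof.
  destruct v as [v1 v2]; unfold nsq, lin_app; cbn [fst snd].
  transitivity ((c ^ 2 + s ^ 2) * (v1 ^ 2 + v2 ^ 2)); [ring|rewrite unit_cs; ring].
Qed.

Lemma reflection_involutive v :
  lin_app c (- s) (- s) (- c) (lin_app c (- s) (- s) (- c) v) = v.
Proof.
  destruct v as [v1 v2]; unfold lin_app; cbn [fst snd]. f_equal.
  - transitivity ((c ^ 2 + s ^ 2) * v1); [ring|rewrite unit_cs; ring].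
  - transitivity ((c ^ 2 + s ^ 2) * v2); [ring|rewrite unit_cs; ring].
Qed.

End Reflections.

(* Polar decomposition, for a matrix of negative determinant. *)
Lemma reflection_symmetrizes e f g h : e * h - f * g < 0 ->
  exists c s p q r, c ^ 2 + s ^ 2 = 1 /\ 0 < p /\ sdet p q r = - (e * h - f * g) /\
    forall v, lin_app e f g h (lin_app c (- s) (- s) (- c) v) = lin_app p q q r v.
Proof.
  intros Hdet.
  set (al := e - h). set (be := - f - g).
  assert (Hab : 0 < al ^ 2 + be ^ 2).
  { destruct (Req_dec al 0) as [Ha|Ha]; [destruct (Req_dec be 0) as [Hb|Hb]|].
    - exfalso. assert (h = e) by (unfold al in Ha; lra). assert (g = - f) by (unfold be in Hb; lra).
      subst h g. nra.
    - pose proof (pow2_pos be Hb). pose proof (pow2_ge_0 al). lra.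
    - pose proof (pow2_pos al Ha). pose proof (pow2_ge_0 be). lra. }
  set (N := sqrt (al ^ 2 + be ^ 2)).
  assert (HN : 0 < N) by (apply sqrt_lt_R0; exact Hab).
  assert (HN2 : N ^ 2 = al ^ 2 + be ^ 2) by (apply pow2_sqrt; lra).
  set (c := al / N). set (s := be / N).
  assert (Hcs : c ^ 2 + s ^ 2 = 1).
  { unfold c, s. replace ((al / N) ^ 2 + (be / N) ^ 2) with ((al ^ 2 + be ^ 2) / N ^ 2) by (field; lra).
    rewrite <- HN2. field. lra. }
  assert (Hsym : - e * s - f * c = g * c - h * s) by (unfold c, s, al, be; field; lra).
  assert (Htr : (e * c - f * s) + (- g * s - h * c) = N).
  { transitivity (c * al + s * be); [unfold al, be; ring|]. unfold c, s.
    replace (al / N * al + be / N * be) with ((al ^ 2 + be ^ 2) / N) by (field; lra).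
    rewrite <- HN2. field. lra. }
  assert (Hd : sdet (e * c - f * s) (- e * s - f * c) (- g * s - h * c) = - (e * h - f * g)).
  { unfold sdet. rewrite Hsym at 2.
    transitivity ((e * h - f * g) * - (c ^ 2 + s ^ 2)); [ring|rewrite Hcs; ring]. }
  exists c, s, (e * c - f * s), (- e * s - f * c), (- g * s - h * c).
  split; [exact Hcs|split; [|split; [exact Hd|]]].
  - unfold sdet in Hd. pose proof (pow2_ge_0 (- e * s - f * c)). nra.
  - intros [v1 v2]. unfold lin_app; cbn [fst snd]. f_equal; [ring|].
    rewrite Hsym. ring.
Qed.

(* [ellipse_form p q r w = |adj(S) w|^2 = det(S)^2 |S^-1 w|^2] for [S = [[p, q], [q, r]]],
   so the inscribed ellipse [S(unit disk)] is its sublevel set at [det(S)^2]. *)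
Definition ellipse_form (p q r : R) : pt -> R := qf (r ^ 2 + q ^ 2) (- q * (p + r)) (q ^ 2 + p ^ 2).

Lemma ellipse_form_nsq p q r w : ellipse_form p q r w = nsq (lin_app r (- q) (- q) p w).
Proof. destruct w; unfold ellipse_form, qf, nsq, lin_app; cbn [fst snd]; ring. Qed.

Lemma adj_lin_app p q r u : lin_app r (- q) (- q) p (lin_app p q q r u) = pscal (sdet p q r) u.
Proof. unfold sdet; pt_field. Qed.

Lemma lin_app_sym_surj p q r w : sdet p q r <> 0 -> exists u, w = lin_app p q q r u.
Proof.
  intros Hd. exists (pscal (/ sdet p q r) (lin_app r (- q) (- q) p w)).
  unfold sdet in *; pt_field; exact Hd.
Qed.

(* [T] maps the maximal inscribed ellipse [S(disk)] onto the inscribed ellipse [T S(disk)] of the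
   same area; by uniqueness [T S = S R] for a reflection [R], and [R] preserves the form. *)
Lemma max_inscribed_form_invariant K M p q r a b c d :
  is_convex K -> (forall z, K z -> pnorm z <= M) ->
  inscribed K p q r -> (forall p1 q1 r1, inscribed K p1 q1 r1 -> sdet p1 q1 r1 <= sdet p q r) ->
  a * d - b * c = -1 -> (forall z, K z -> K (lin_app a b c d z)) ->
  forall w, ellipse_form p q r (lin_app a b c d w) = ellipse_form p q r w.
Proof.
  intros Hconv HM Hf Hmax HdT HT w. pose proof Hf as [Hp [Hd HKS]].
  set (T := lin_app a b c d) in *. set (S := lin_app p q q r) in *.
  assert (HTS : forall v, T (S v) = lin_app (a * p + b * q) (a * q + b * r) (c * p + d * q) (c * q + d * r) v)
    by (intros v; unfold T, S; pt_field).
  destruct (reflection_symmetrizes (a * p + b * q) (a * q + b * r) (c * p + d * q) (c * q + d * r))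
    as [cs [sn [p' [q' [r' [Hcs [Hp' [Hd' HS']]]]]]]].
  { replace ((a * p + b * q) * (c * q + d * r) - (a * q + b * r) * (c * p + d * q))
      with ((a * d - b * c) * sdet p q r) by (unfold sdet; ring). rewrite HdT. lra. }
  set (Rf := lin_app cs (- sn) (- sn) (- cs)) in *.
  assert (Hd'S : sdet p' q' r' = sdet p q r).
  { rewrite Hd'. replace ((a * p + b * q) * (c * q + d * r) - (a * q + b * r) * (c * p + d * q))
      with ((a * d - b * c) * sdet p q r) by (unfold sdet; ring). rewrite HdT. ring. }
  assert (Hf' : inscribed K p' q' r').
  { split; [exact Hp'|split; [lra|]]. intros v Hv. rewrite <- HS', <- HTS.
    apply HT, HKS. unfold Rf. rewrite nsq_reflection; assumption. }
  destruct (max_inscribed_unique K M p q r p' q' r' Hconv HM Hf Hmax Hf' Hd'S) as [-> [-> ->]].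
  assert (HTSR : forall u, T (S u) = S (Rf u)).
  { intros u. rewrite <- (reflection_involutive cs sn Hcs u) at 1. fold Rf. rewrite HTS. apply HS'. }
  destruct (lin_app_sym_surj p q r w ltac:(lra)) as [u ->]. fold S.
  rewrite HTSR, !ellipse_form_nsq. unfold S. rewrite !adj_lin_app, !nsq_pscal.
  unfold Rf. rewrite nsq_reflection; auto.
Qed.

Lemma is_ellipse_of_sublevel (K : pt -> Prop) A B C k :
  0 < A -> 0 < A * C - B * B -> 0 < k -> (forall w, K w <-> qf A B C w <= k) -> is_ellipse K.
Proof.
  intros HA HD Hk HK. exists (A / k), (B / k), (C / k). split; [|split].
  - now apply Rdiv_lt_0_compat.
  - replace (A / k * (C / k) - B / k * (B / k)) with ((A * C - B * B) / k ^ 2) by (field; lra).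
    apply Rdiv_lt_0_compat; [exact HD|apply pow_lt, Hk].
  - intros w. rewrite HK. unfold qf.
    replace (A / k * fst w ^ 2 + 2 * (B / k) * fst w * snd w + C / k * snd w ^ 2)
      with ((A * fst w ^ 2 + 2 * B * fst w * snd w + C * snd w ^ 2) / k) by (field; lra).
    split; intros H.
    + apply (Rmult_le_reg_r k); [exact Hk|]. field_simplify; lra.
    + apply (Rmult_le_reg_r (/ k)); [now apply Rinv_0_lt_compat|].
      rewrite Rinv_r by lra. exact H.
Qed.

Lemma reflection_invariant_ellipse (K : pt -> Prop) :
  is_compact K -> is_convex K -> nonempty_interior K -> centrally_symmetric K ->
  (forall x y : pt, boundary_pt K x -> boundary_pt K y ->
     x <> y -> x <> popp y ->
     forall a b c d : R,
       lin_app a b c d (padd x y) = popp (padd x y) ->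
       lin_app a b c d (psub y x) = psub y x ->
       forall p, K p -> K (lin_app a b c d p)) ->
  is_ellipse K.
Proof.
  intros [Hcl Hbd] Hconv Hint Hsym Hrefl. pose proof Hbd as [M HM].
  destruct (exists_max_inscribed K Hcl Hbd Hconv Hint Hsym) as [p [q [r [Hf Hmax]]]].
  pose proof Hf as [Hp [Hd _]].
  assert (Hr : 0 < r) by (unfold sdet in Hd; pose proof (pow2_ge_0 q); nra).
  assert (HA : 0 < r ^ 2 + q ^ 2) by (pose proof (pow2_ge_0 q); pose proof (pow_lt r 2 Hr); lra).
  assert (HD : 0 < (r ^ 2 + q ^ 2) * (q ^ 2 + p ^ 2) - (- q * (p + r)) * (- q * (p + r))).
  { replace ((r ^ 2 + q ^ 2) * (q ^ 2 + p ^ 2) - (- q * (p + r)) * (- q * (p + r)))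
      with (sdet p q r ^ 2) by (unfold sdet; ring). now apply pow_lt. }
  destruct (exists_boundary_on_ray K Hconv Hint Hsym Hcl Hbd (1, 0)) as [t [_ Hx0]].
  { intros E; injection E; lra. }
  set (x0 := pscal t (1, 0)) in *.
  assert (Hlevel : forall y, boundary_pt K y -> ellipse_form p q r y = ellipse_form p q r x0).
  { intros y Hy.
    destruct (classic (y = x0)) as [->|Hne]; [reflexivity|].
    destruct (classic (y = popp x0)) as [->|Hne']; [apply qf_popp|].
    assert (Hdet : det2 x0 y <> 0).
    { intros H0. destruct (boundary_collinear K Hconv Hint Hsym Hcl x0 y Hx0 Hy H0); auto. }
    destruct (exists_reflection x0 y Hdet) as [a [b [c [d [E1 [E2 [HdT Tx0]]]]]]].
    assert (HT : forall z, K z -> K (lin_app a b c d z)).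
    { apply (Hrefl x0 y Hx0 Hy); auto. intros E. apply Hne'. rewrite E.
      destruct y; unfold popp; cbn [fst snd]; f_equal; ring. }
    rewrite <- (max_inscribed_form_invariant K M p q r a b c d Hconv HM Hf Hmax HdT HT x0), Tx0.
    symmetry. apply qf_popp. }
  assert (Hpos : forall v, v <> (0, 0) -> 0 < ellipse_form p q r v) by (intros; now apply qf_pos).
  apply (is_ellipse_of_sublevel K _ _ _ (ellipse_form p q r x0) HA HD).
  - apply Hpos, (radial_boundary_neq0 K), (boundary_radial K Hconv Hint Hsym Hcl), Hx0.
  - apply (sublevel_of_boundary_level K Hconv Hint Hsym Hcl Hbd); auto. intros; apply qf_pscal.
Qed.

Theorem corollary3p1 (K : pt -> Prop)
  (Hcomp : is_compact K) (Hconv : is_convex K)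
  (Hint : nonempty_interior K) (Hsym : centrally_symmetric K) :
  is_ellipse K <->
  (forall x y : pt, boundary_pt K x -> boundary_pt K y ->
     x <> y -> x <> popp y ->
     forall a b c d : R,
       lin_app a b c d (padd x y) = popp (padd x y) ->
       lin_app a b c d (psub y x) = psub y x ->
       forall p, K p -> K (lin_app a b c d p)).
Proof.
  split.
  - apply ellipse_reflection_invariant; auto. apply Hcomp.
  - now apply reflection_invariant_ellipse.
Qed.
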